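(* In the Rustichini setting, let $F\in\mathcal F$ and $x,y\in\operatorname{ri}(F)$. Then $\mathcal N(x)=\mathcal N(y)$.
   Context: Rustichini setting: a $k$-action partial monitoring game with finite latent space $\mathcal Z$, loss $\mathcal L:[k]\times\mathcal Z\to[0,1]$, signal $\mathcal S:[k]\times\mathcal Z\to\Sigma$; $\mathcal K$ = probability simplex on $\mathcal Z$; $\Delta_k$ = probability simplex on $[k]$; $\mathcal L(\pi,x)=\sum_a\sum_z\pi(a)x(z)\mathcal L(a,z)$; $\mathcal S(a,x)$ = law of $\mathcal S(a,z)$, $z\sim x$; $x\,\mathrm R\,y$ iff $\mathcal S(a,x)=\mathcal S(a,y)$ for all $a$; $\mathcal V(\pi,x)=\sup_{y\,\mathrm R\,x}\mathcal L(\pi,y)$; $\mathcal V_\star(x)=\min_{\pi\in\Delta_k}\mathcal V(\pi,x)$; $\Delta(\pi,x)=\mathcal V(\pi,x)-\mathcal V_\star(x)$. $\mathcal V_\star$ is concave piecewise linear and $m$ is the smallest integer with $\mathcal V_\star(x)=\min_{\alpha\in[m]}\mathcal V^m(x)_\alpha$ for some linear $\mathcal V^m:\mathcal K\to\mathbb R^m$. For $\alpha\in[m]$ the cell is the polytope $P_\alpha=\{x\in\mathcal K:\mathcal V_\star(x)=\mathcal V^m(x)_\alpha\}$, and $\mathcal F=\bigcup_{\alpha\in[m]}\operatorname{faces}(P_\alpha)$ (faces include the polytope itself and $\emptyset$). $\mathcal N(x)=\{\pi\in\Delta_k:\Delta(\pi,x)=0\}$. $\operatorname{ri}$ denotes relative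 interior. *)

From HB Require Import structures.
From mathcomp Require Import all_boot all_order all_algebra.
From mathcomp Require Import boolp classical_sets reals.
Import Order.TTheory GRing.Theory Num.Theory.
Local Open Scope ring_scope.
Local Open Scope classical_set_scope.

Section Rustichini.
Context {R : realType} {Z : finType} {k : nat} {Sig : eqType}.

Definition simplexZ : set (Z -> R) :=
  [set x | (forall z, 0 <= x z) /\ \sum_z x z = 1].

Definition simplexA : set ('I_k -> R) :=
  [set p | (forall a, 0 <= p a) /\ \sum_a p a = 1].

Definition dotZ (w x : Z -> R) : R := \sum_z w z * x z.

(* faces of a polytope P: intersections of P with a supporting hyperplane
   {x | <w,x> = b} where <w,.> <= b on P.  (w = 0, b = 0 gives P itself;
   w = 0, b = 1 gives the empty face.) *)
Definition faces (P : set (Z -> R)) : set (set (Z -> R)) :=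
  [set F | exists (w : Z -> R) (b : R),
     (forall x, P x -> dotZ w x <= b) /\ F = [set x | P x /\ dotZ w x = b]].

Definition aff (F : set (Z -> R)) : set (Z -> R) :=
  [set x | exists (n : nat) (p : 'I_n -> Z -> R) (l : 'I_n -> R),
     (forall i, F (p i)) /\ (\sum_i l i = 1) /\
     x = (fun z => \sum_i l i * p i z)].

Definition ri (F : set (Z -> R)) : set (Z -> R) :=
  [set x | F x /\ exists2 e : R, 0 < e &
     forall y, aff F y -> (forall z, `|y z - x z| < e) -> F y].

Variables (L : 'I_k -> Z -> R) (S : 'I_k -> Z -> Sig).

Definition lossP (pi : 'I_k -> R) (x : Z -> R) : R :=
  \sum_a \sum_z pi a * x z * L a z.

Definition sigLaw (a : 'I_k) (x : Z -> R) : Sig -> R :=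
  fun s => \sum_(z | S a z == s) x z.

Definition Rrel (x y : Z -> R) : Prop := forall a, sigLaw a x = sigLaw a y.

Definition Vf (pi : 'I_k -> R) (x : Z -> R) : R :=
  sup [set lossP pi y | y in [set y | simplexZ y /\ Rrel y x]].

(* V_*(x) = min_{pi in Delta_k} V(pi, x) (written as an infimum; it is attained) *)
Definition Vstar (x : Z -> R) : R := inf [set Vf pi x | pi in simplexA].

Definition gap (pi : 'I_k -> R) (x : Z -> R) : R := Vf pi x - Vstar x.

Definition Nset (x : Z -> R) : set ('I_k -> R) :=
  [set pi | simplexA pi /\ gap pi x = 0].

(* coordinate alpha of the linear map V^m : x |-> (sum_z c alpha z * x z)_alpha *)
Definition linV {m : nat} (c : 'I_m -> Z -> R) (alpha : 'I_m) (x : Z -> R) : R :=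
  \sum_z c alpha z * x z.

Definition represents {m : nat} (c : 'I_m -> Z -> R) : Prop :=
  forall x, simplexZ x ->
    (exists alpha, Vstar x = linV c alpha x) /\
    (forall alpha, Vstar x <= linV c alpha x).

Definition minimal_pieces (m : nat) : Prop :=
  (exists c : 'I_m -> Z -> R, represents c) /\
  (forall m' (c' : 'I_m' -> Z -> R), represents c' -> (m <= m')%N).

Definition cell {m : nat} (c : 'I_m -> Z -> R) (alpha : 'I_m) : set (Z -> R) :=
  [set x | simplexZ x /\ Vstar x = linV c alpha x].

Definition face_family {m : nat} (c : 'I_m -> Z -> R) : set (set (Z -> R)) :=
  [set F | exists alpha, faces (cell c alpha) F].
End Rustichini.

From HB Require Import structures.
From mathcomp Require Import all_boot all_order all_algebra.
From mathcomp Require Import boolp classical_sets reals.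
From mathcomp Require Import ring lra.
Import Order.TTheory GRing.Theory Num.Theory.
Local Open Scope ring_scope.
Local Open Scope classical_set_scope.

(* On a cell P_alpha the optimal value V_* is the linear function V^m_alpha,
   while every V(pi, .) is concave (a mixture of two feasible latent laws is
   feasible for the mixture).  Hence the gap Delta(pi, .) is a nonnegative
   concave function on the face F.  If it vanishes at x in ri F, then for any
   y in F, x lies strictly between y and a point z of F beyond x, and
   0 = Delta(pi, x) >= mu Delta(pi, z) + (1 - mu) Delta(pi, y) forces
   Delta(pi, y) = 0.  By symmetry N(x) = N(y). *)

Set Implicit Arguments.
Unset Strict Implicit.

Section ConvexGeometry.
Context {R : realType} {Z : finType}.

Definition mix (mu : R) (f g : Z -> R) : Z -> R :=
  fun z => mu * f z + (1 - mu) * g z.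

Lemma sum_mix (P : pred Z) mu f g :
  \sum_(z | P z) mix mu f g z =
  mu * \sum_(z | P z) f z + (1 - mu) * \sum_(z | P z) g z.
Proof. by rewrite /mix big_split /= -!mulr_sumr. Qed.

Lemma simplexZ_mix mu f g : 0 <= mu <= 1 ->
  simplexZ f -> simplexZ g -> simplexZ (mix mu f g).
Proof.
move=> /andP[mu_ge0 mu_le1] [f_ge0 f_sum] [g_ge0 g_sum]; split.
  by move=> z; rewrite addr_ge0 // mulr_ge0 // subr_ge0.
by rewrite (sum_mix xpredT) f_sum g_sum; ring.
Qed.

Lemma faces_sub (P F : set (Z -> R)) : faces P F -> F `<=` P.
Proof. by case=> w [b [_ ->]] v []. Qed.

Lemma ri_mix_extend (F : set (Z -> R)) x y : ri F x -> F y ->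
  exists2 mu, 0 < mu < 1 & exists2 z, F z & x = mix mu z y.
Proof.
case=> Fx [e e_gt0 ri_x] Fy.
pose M := \sum_z `|x z - y z|.
have M1_gt0 : 0 < M + 1 by rewrite ltr_pwDr // sumr_ge0.
have le_M z : `|x z - y z| <= M by rewrite /M (bigD1 z) //= lerDl sumr_ge0.
(* z0 = x + t (x - y) is an affine combination of x and y, within e of x. *)
pose t := e / (2 * (M + 1)).
have t_gt0 : 0 < t by rewrite divr_gt0 // mulr_gt0.
pose z0 := fun z => x z + t * (x z - y z).
have Fz0 : F z0.
  apply: ri_x => [|z].
    exists 2%N, (fun i : 'I_2 => if i == ord0 then x else y),
      (fun i : 'I_2 => if i == ord0 then 1 + t else - t).
    split; first by move=> i; case: (i == ord0).
    split; first by rewrite !big_ord_recl big_ord0 /=; ring.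
    by apply/funext => z; rewrite !big_ord_recl big_ord0 /= /z0; ring.
  rewrite /z0 addrC addKr normrM gtr0_norm //.
  apply: (@le_lt_trans _ _ (t * (M + 1))).
    by rewrite ler_pM2l // (le_trans (le_M z)) // lerDl.
  have -> : t * (M + 1) = e / 2 by rewrite /t; field; rewrite gt_eqF.
  by rewrite ltr_pdivrMr // ltr_pMr // ltr1n.
have t1_gt0 : 0 < 1 + t by rewrite addr_gt0.
exists (1 + t)^-1; first by rewrite invr_gt0 t1_gt0 invf_lt1 // ltrDl.
by exists z0 => //; apply/funext => z; rewrite /mix /z0; field; rewrite gt_eqF.
Qed.

Lemma concave_ge0_eq0_on_ri (F : set (Z -> R)) (g : (Z -> R) -> R) x y :
  (forall v, F v -> 0 <= g v) ->
  (forall mu u v, 0 < mu < 1 -> F u -> F v -> F (mix mu u v) ->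
     mu * g u + (1 - mu) * g v <= g (mix mu u v)) ->
  ri F x -> g x = 0 -> F y -> g y = 0.
Proof.
move=> g_ge0 g_concave rix gx0 Fy.
have Fx : F x by case: rix.
have [mu mu01 [z Fz x_eq]] := ri_mix_extend rix Fy.
have /andP[mu_gt0 mu_lt1] := mu01.
have := g_concave _ _ _ mu01 Fz Fy.
rewrite -x_eq gx0 => /(_ Fx) le_gap.
have gz_ge0 : 0 <= mu * g z by rewrite mulr_ge0 ?g_ge0 // ltW.
have : (1 - mu) * g y <= 0 by lra.
rewrite pmulr_rle0 ?subr_gt0 // => gy_le0.
by apply/eqP; rewrite eq_le gy_le0 g_ge0.
Qed.

End ConvexGeometry.

Section Game.
Context {R : realType} {Z : finType} {k : nat} {Sig : eqType}.
Variables (L : 'I_k -> Z -> R) (S : 'I_k -> Z -> Sig).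
Hypothesis L_bounded : forall a z, 0 <= L a z <= 1.

Lemma Rrel_mix (mu : R) (f g f' g' : Z -> R) : Rrel S f f' -> Rrel S g g' ->
  Rrel S (mix mu f g) (mix mu f' g').
Proof.
move=> ff' gg' a; apply/funext => s; rewrite /sigLaw.
rewrite !(sum_mix (fun z => S a z == s)) -!/(sigLaw S a _ s).
by rewrite ff' gg'.
Qed.

Lemma lossP_mix pi mu f g :
  lossP L pi (mix mu f g) = mu * lossP L pi f + (1 - mu) * lossP L pi g.
Proof.
rewrite /lossP !mulr_sumr -big_split /=; apply: eq_bigr => a _.
by rewrite !mulr_sumr -big_split /=; apply: eq_bigr => z _; rewrite /mix; ring.
Qed.

Lemma linV_mix m (c : 'I_m -> Z -> R) alpha mu f g :
  linV c alpha (mix mu f g) = mu * linV c alpha f + (1 - mu) * linV c alpha g.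
Proof.
rewrite /linV !mulr_sumr -big_split /=.
by apply: eq_bigr => z _; rewrite /mix; ring.
Qed.

Lemma lossP_bounded pi y : simplexA pi -> simplexZ y ->
  0 <= lossP L pi y <= 1.
Proof.
move=> [pi_ge0 pi_sum] [y_ge0 y_sum]; apply/andP; split.
  apply: sumr_ge0 => a _; apply: sumr_ge0 => z _.
  by rewrite !mulr_ge0 //; case/andP: (L_bounded a z).
apply: (@le_trans _ _ (\sum_a \sum_z pi a * y z)).
  apply: ler_sum => a _; apply: ler_sum => z _.
  by apply: ler_piMr; [rewrite mulr_ge0 | case/andP: (L_bounded a z)].
rewrite (eq_bigr pi) ?pi_sum // => a _.
by rewrite -mulr_sumr y_sum mulr1.
Qed.

Lemma Vf_ge pi w y : simplexA pi -> simplexZ y -> Rrel S y w ->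
  lossP L pi y <= Vf L S pi w.
Proof.
move=> pi_simplex y_simplex yw; apply: ub_le_sup; last by exists y.
by exists 1 => _ [y' [y'_simplex _] <-]; case/andP: (lossP_bounded pi_simplex y'_simplex).
Qed.

Lemma Vf_le pi w M : simplexZ w ->
  (forall y, simplexZ y -> Rrel S y w -> lossP L pi y <= M) -> Vf L S pi w <= M.
Proof.
move=> w_simplex le_M; apply: ge_sup; first by exists (lossP L pi w), w.
by move=> _ [y [y_simplex yw] <-]; apply: le_M.
Qed.

Lemma Vstar_le_Vf pi w : simplexA pi -> simplexZ w -> Vstar L S w <= Vf L S pi w.
Proof.
move=> pi_simplex w_simplex; apply: ge_inf; last by exists pi.
exists 0 => _ [p p_simplex <-].
apply: le_trans (Vf_ge p_simplex w_simplex (fun _ => erefl)).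
by case/andP: (lossP_bounded p_simplex w_simplex).
Qed.

Lemma gap_ge0 pi w : simplexA pi -> simplexZ w -> 0 <= gap L S pi w.
Proof. by move=> ? ?; rewrite subr_ge0 Vstar_le_Vf. Qed.

Lemma Vf_concave pi mu f g : 0 < mu < 1 ->
  simplexA pi -> simplexZ f -> simplexZ g ->
  mu * Vf L S pi f + (1 - mu) * Vf L S pi g <= Vf L S pi (mix mu f g).
Proof.
move=> /andP[mu_gt0 mu_lt1] pi_simplex f_simplex g_simplex.
have mu'_gt0 : 0 < 1 - mu by rewrite subr_gt0.
have mixed_feasible y1 y2 : simplexZ y1 -> Rrel S y1 f -> simplexZ y2 -> Rrel S y2 g ->
    mu * lossP L pi y1 + (1 - mu) * lossP L pi y2 <= Vf L S pi (mix mu f g).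
  move=> ? y1f ? y2g; rewrite -lossP_mix.
  by apply: Vf_ge => //; [apply: simplexZ_mix; rewrite ?ltW | apply: Rrel_mix].
have sup_left y2 : simplexZ y2 -> Rrel S y2 g ->
    mu * Vf L S pi f + (1 - mu) * lossP L pi y2 <= Vf L S pi (mix mu f g).
  move=> ? ?; rewrite -lerBrDr -ler_pdivlMl //.
  by apply: Vf_le => // y1 ? ?; rewrite ler_pdivlMl // lerBrDr; apply: mixed_feasible.
rewrite addrC -lerBrDr -ler_pdivlMl //.
by apply: Vf_le => // y2 ? ?; rewrite ler_pdivlMl // lerBrDr addrC; apply: sup_left.
Qed.

Lemma gap_concave_on_cell m (c : 'I_m -> Z -> R) alpha pi mu u v :
  0 < mu < 1 -> simplexA pi ->
  cell L S c alpha u -> cell L S c alpha v -> cell L S c alpha (mix mu u v) ->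
  mu * gap L S pi u + (1 - mu) * gap L S pi v <= gap L S pi (mix mu u v).
Proof.
move=> mu01 pi_simplex [u_simplex Vu] [v_simplex Vv] [_ Vuv].
rewrite /gap Vu Vv Vuv linV_mix.
have := Vf_concave mu01 pi_simplex u_simplex v_simplex; lra.
Qed.

Lemma Nset_sub_on_ri m (c : 'I_m -> Z -> R) alpha (F : set (Z -> R)) x y :
  F `<=` cell L S c alpha -> ri F x -> F y -> Nset L S x `<=` Nset L S y.
Proof.
move=> F_sub rix Fy pi [pi_simplex gap_x]; split => //.
apply: (concave_ge0_eq0_on_ri (g := gap L S pi) _ _ rix gap_x Fy).
  by move=> v /F_sub [v_simplex _]; apply: gap_ge0.
move=> mu u v mu01 /F_sub Pu /F_sub Pv /F_sub Puv.
exact: gap_concave_on_cell mu01 pi_simplex Pu Pv Puv.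
Qed.

End Game.

Theorem lemma5 (R : realType) (Z : finType) (k : nat) (Sig : eqType)
  (L : 'I_k -> Z -> R) (S : 'I_k -> Z -> Sig)
  (hL : forall a z, 0 <= L a z <= 1)
  (m : nat) (c : 'I_m -> Z -> R)
  (hm : minimal_pieces L S m)
  (hc : represents L S c)
  (F : set (Z -> R)) (hF : face_family L S c F)
  (x y : Z -> R) (hx : ri F x) (hy : ri F y) :
  Nset L S x = Nset L S y.
Proof.
have [alpha /faces_sub F_sub] := hF.
have [Fx _] := hx; have [Fy _] := hy.
apply/seteqP; split.
- exact: (Nset_sub_on_ri hL F_sub hx Fy).
- exact: (Nset_sub_on_ri hL F_sub hy Fx).
Qed.
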